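(* Let $p$ be a prime, $q=p^m$, and $f:\mathbb{F}_q\to\mathbb{F}_p$ any function. The following are equivalent: (i) $f(ax)=f(x)$ for all $(a,x)\in\mathbb{F}_p^*\times\mathbb{F}_q$; (ii) $W_f(a\beta)=W_f(\beta)$ for all $(a,\beta)\in\mathbb{F}_p^*\times\mathbb{F}_q$; (iii) $aD_{f,i}=D_{f,i}$ for all $(a,i)\in\mathbb{F}_p^*\times\mathbb{F}_p$; (iv) $\chi_\beta(D_{f,i})$ is a rational integer for all $(i,\beta)\in\mathbb{F}_p\times\mathbb{F}_q$.
   Context: $\mathrm{Tr}$ is the absolute trace $\mathbb{F}_q\to\mathbb{F}_p$, $\zeta_p=e^{2\pi\sqrt{-1}/p}$, $W_f(\beta)=\sum_{x\in\mathbb{F}_q}\zeta_p^{f(x)-\mathrm{Tr}(\beta x)}$, $D_{f,i}=\{x\in\mathbb{F}_q:f(x)=i\}$, $aD=\{ad:d\in D\}$, and $\chi_\beta(D)=\sum_{\alpha\in D}\zeta_p^{\mathrm{Tr}(\beta\alpha)}$ for $D\subseteq\mathbb{F}_q$. *)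

From HB Require Import structures.
From mathcomp Require Import all_boot all_order all_algebra all_field.
Set Implicit Arguments. Unset Strict Implicit. Unset Printing Implicit Defensive.
Import Order.TTheory GRing.Theory Num.Theory.
Local Open Scope ring_scope.

Section Defs.
Variables (p m : nat) (F : finFieldType).

Definition emb (a : 'F_p) : F := (val a)%:R.

Definition trsum (x : F) : F := \sum_(i < m) x ^+ (p ^ i).

Definition Tr (x : F) : 'F_p := odflt 0 [pick k : 'F_p | emb k == trsum x].

(* zeta_p = e^(2 pi i / p) in algC:  p.-root(-1) = e^(i pi / p) *)
Definition zeta : algC := (p.-root (-1)) ^+ 2.

Definition zpow (k : 'F_p) : algC := zeta ^+ val k.

Definition Walsh (f : F -> 'F_p) (beta : F) : algC :=
  \sum_(x : F) zpow (f x - Tr (beta * x)).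

Definition Dfi (f : F -> 'F_p) (i : 'F_p) : {set F} := [set x | f x == i].

Definition scaleset (a : 'F_p) (D : {set F}) : {set F} := [set emb a * d | d in D].

Definition chi (beta : F) (D : {set F}) : algC :=
  \sum_(alpha in D) zpow (Tr (beta * alpha)).
End Defs.

From mathcomp Require Import all_boot all_order all_algebra all_field.
(* Scaling by a in F_p^* commutes with the additive Fourier transform
   h^(b) = \sum_x h(x) zeta^Tr(b x), because Tr is F_p-linear, and Fourier
   inversion makes the transform injective: h is invariant under x |-> a x iff
   h^ is.  For h = zeta^f this is (i) <-> (ii), as W_f(b) = h^(-b), while
   (i) <-> (iii) says that every level set D_{f,i} is F_p^*-stable.
   chi_b(D) is the transform of the indicator of D.  If D is F_p^*-stable,
   multiplication by k <> 0 maps {x in D | Tr(b x) = 1} onto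
   {x in D | Tr(b x) = k}, so chi_b(D) = N_0 + N_1 \sum_(k <> 0) zeta^k
   = N_0 - N_1 is an integer.  Conversely, the automorphism zeta |-> zeta^a of
   Q(zeta) fixes integers and maps chi_b(D) to chi_(a b)(D), so if all the
   chi_b(D) are integers the transform of the indicator of D, hence D itself,
   is F_p^*-stable. *)

Set Implicit Arguments.
Unset Strict Implicit.
Unset Printing Implicit Defensive.

Import GRing.Theory Num.Theory.
Local Open Scope ring_scope.

Section Embedding.
Variables (p : nat) (F : finFieldType).
Hypothesis charF : p \in [pchar F].

Let pP : prime p := pcharf_prime charF.
Local Notation emb := (@emb p F).

Lemma emb_natr n : emb n%:R = n%:R.
Proof.
by rewrite /emb -[RHS](GRing.natr_mod_pchar charF); congr _%:R; apply: val_Fp_nat.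
Qed.

Lemma embD a b : emb (a + b) = emb a + emb b.
Proof. by rewrite -[a]natr_Zp -[b]natr_Zp -natrD !emb_natr natrD. Qed.

Lemma embM a b : emb (a * b) = emb a * emb b.
Proof. by rewrite -[a]natr_Zp -[b]natr_Zp -natrM !emb_natr natrM. Qed.

Lemma embB a b : emb (a - b) = emb a - emb b.
Proof. by apply: (addIr (emb b)); rewrite -embD !subrK. Qed.

Lemma emb1 : emb 1 = 1.
Proof. exact: emb_natr 1. Qed.

Lemma emb_eq0 a : (emb a == 0) = (a == 0).
Proof.
apply/eqP/eqP => [a0|->//].
apply/eqP; apply: contraT => /mulfV a1.
by rewrite -(oner_eq0 F) -emb1 -a1 embM a0 mul0r.
Qed.

Lemma emb_neq0 {a} : a != 0 -> emb a != 0.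
Proof. by rewrite emb_eq0. Qed.

Lemma emb_inj : injective emb.
Proof.
by move=> a b eq_ab; apply/eqP; rewrite -subr_eq0 -emb_eq0 embB eq_ab subrr.
Qed.

Lemma embXp i a : emb a ^+ (p ^ i) = emb a.
Proof.
elim: i => [|i IH]; first by rewrite expr1.
by rewrite expnSr exprM IH -[a]natr_Zp emb_natr -pFrobenius_autE pFrobenius_aut_nat.
Qed.

(* The p elements of F_p already exhaust the roots of X^p - X. *)
Lemma Frobenius_fixed_emb y : y ^+ p = y -> y \in codom emb.
Proof.
move=> yp; apply: contraT => y_notin.
pose P : {poly F} := 'X^p - 'X.
have sizeP : size P = p.+1.
  by rewrite size_polyDl size_polyXn // size_polyN size_polyX ltnS prime_gt1.
have rootP z : z ^+ p = z -> root P z by rewrite /root !hornerE => ->; rewrite subrr.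
suff: P = 0 by move=> P0; move: sizeP; rewrite P0 size_poly0.
apply: (@roots_geq_poly_eq0 _ P (y :: codom emb)) => /=.
- rewrite rootP //; apply/allP => _ /codomP[a ->].
  by rewrite rootP // -{2}(embXp 1 a) expn1.
- by rewrite y_notin (map_inj_uniq emb_inj) enum_uniq.
- by rewrite size_codom card_Fp // sizeP.
Qed.

End Embedding.

Section Trace.
Variables (p m : nat) (F : finFieldType).
Hypotheses (charF : p \in [pchar F]) (cardF : #|F| = (p ^ m)%N).

Let pP : prime p := pcharf_prime charF.
Local Notation emb := (@emb p F).
Local Notation trsum := (@trsum p m F).
Local Notation Tr := (@Tr p m F).

Lemma pchar_nat_expn i : [pchar F].-nat (p ^ i)%N.
Proof. by rewrite pnatX (eq_pnat _ (pcharf_eq charF)) pnat_id. Qed.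

Lemma trsumD x y : trsum (x + y) = trsum x + trsum y.
Proof.
rewrite /trsum -big_split; apply: eq_bigr => i _.
exact: exprDn_pchar (pchar_nat_expn i).
Qed.

Lemma trsumZ a x : trsum (emb a * x) = emb a * trsum x.
Proof.
by rewrite /trsum mulr_sumr; apply: eq_bigr => i _; rewrite exprMn embXp.
Qed.

Lemma trsum_Frobenius x : trsum x ^+ p = trsum x.
Proof.
rewrite -pFrobenius_autE (rmorph_sum (pFrobenius_aut charF)) /trsum.
case: m cardF => [|n cardFn]; first by rewrite !big_ord0.
rewrite [LHS]big_ord_recr [RHS]big_ord_recl /= addrC.
congr (_ + _); first by rewrite pFrobenius_autE -exprM -expnSr -cardFn expf_card.
by apply: eq_bigr => i _; rewrite pFrobenius_autE -exprM -expnSr.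
Qed.

Lemma TrE x : emb (Tr x) = trsum x.
Proof.
rewrite /Tr; case: pickP => [a /eqP // | no_a].
have /codomP[a ea] := Frobenius_fixed_emb charF (trsum_Frobenius x).
by have := no_a a; rewrite ea eqxx.
Qed.

Lemma TrD x y : Tr (x + y) = Tr x + Tr y.
Proof. by apply: (emb_inj charF); rewrite embD // !TrE trsumD. Qed.

Lemma TrZ a x : Tr (emb a * x) = a * Tr x.
Proof. by apply: (emb_inj charF); rewrite embM // !TrE trsumZ. Qed.

Lemma Tr0 : Tr 0 = 0.
Proof. by apply: (addrI (Tr 0)); rewrite -TrD !addr0. Qed.

Lemma TrN x : Tr (- x) = - Tr x.
Proof. by apply: (addrI (Tr x)); rewrite -TrD !subrr Tr0. Qed.

(* Otherwise all p^m elements of F would be roots of \sum_(i < m) X^(p^i). *)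
Lemma exists_Tr_neq0 : exists x, Tr x != 0.
Proof.
apply/existsP; apply: contraT; rewrite negb_exists => /forallP Tr_eq0.
have p_gt1 := prime_gt1 pP.
have [n mE] : exists n, m = n.+1.
  case: m cardF => [|n] cardFm; last by exists n.
  by move: (finNzRing_gt1 F); rewrite cardFm expn0.
pose T : {poly F} := \sum_(i < n.+1) 'X^(p ^ i).
have sizeT : size T = (p ^ n).+1.
  rewrite /T big_ord_recr /= addrC size_polyDl size_polyXn // ltnS.
  apply: leq_trans (size_sum _ _ _) _; apply/bigmax_leqP => i _.
  by rewrite size_polyXn ltn_exp2l.
suff: T = 0 by move=> T0; move: sizeT; rewrite T0 size_poly0.
apply: (@roots_geq_poly_eq0 _ T (enum F)); last 1 first.
- by rewrite -cardE cardF mE sizeT ltn_exp2l.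
- apply/allP => x _; have /negPn/eqP Tx0 := Tr_eq0 x.
  rewrite /root /T horner_sum; under eq_bigr do rewrite hornerXn.
  by have := TrE x; rewrite Tx0 /trsum mE => <-; rewrite emb_eq0.
- exact: enum_uniq.
Qed.

End Trace.

Section AdditiveCharacter.
Variable p : nat.
Hypothesis pP : prime p.

Local Notation zeta := (@zeta p).
Local Notation zpow := (@zpow p).

Lemma zeta_prim : p.-primitive_root zeta.
Proof.
have p_gt0 := prime_gt0 pP; pose r : algC := p.-root (-1).
have zetaE : zeta = r ^+ 2 by [].
have r_p : r ^+ p = -1 by rewrite rootCK.
have zeta_p : zeta ^+ p = 1 by rewrite zetaE -exprM mulnC exprM r_p sqrrN expr1n.
have zeta_neq1 : zeta != 1.
  rewrite zetaE sqrf_eq1 negb_or; apply/andP; split; apply/eqP => r_eq.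
    by move: r_p; rewrite r_eq expr1n => /eqP; rewrite eq_sym eqNr oner_eq0.
  by have := @rootC_lt0 algC p (-1) (prime_gt1 pP); rewrite -/r r_eq ltrN10.
have [k prim_k k_dvd_p] := prim_order_exists p_gt0 zeta_p.
have [k1 | k_neq1] := eqVneq k 1%N.
  by move: prim_k; rewrite k1 => /prim_expr_order/eqP; rewrite expr1 (negbTE zeta_neq1).
by move/(prime_nt_dvdP pP k_neq1): k_dvd_p prim_k => ->.
Qed.

Lemma zpow_natr n : zpow n%:R = zeta ^+ n.
Proof.
by rewrite /zpow -[RHS](prim_expr_mod zeta_prim); congr (_ ^+ _); apply: val_Fp_nat.
Qed.

Lemma zpow0 : zpow 0 = 1.
Proof. exact: expr0. Qed.

Lemma zpowD a b : zpow (a + b) = zpow a * zpow b.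
Proof. by rewrite -[a]natr_Zp -[b]natr_Zp -natrD !zpow_natr exprD. Qed.

Lemma zpowM a b : zpow (a * b) = zpow a ^+ val b.
Proof. by rewrite -{1}[a]natr_Zp -{1}[b]natr_Zp -natrM zpow_natr exprM. Qed.

Lemma zpow_inj : injective zpow.
Proof.
move=> a b /eqP; rewrite (eq_prim_root_expr zeta_prim) => /eqP ab_mod.
by rewrite -[a]natr_Zp -[b]natr_Zp -(Fp_nat_mod pP) ab_mod Fp_nat_mod.
Qed.

Lemma sum_zpow : \sum_k zpow k = 0.
Proof.
set S := \sum_k zpow k.
have S_shift : S = zpow 1 * S.
  rewrite {1}/S (reindex_inj (addIr 1)) mulr_sumr.
  by apply: eq_bigr => k _; rewrite zpowD mulrC.
have : (zpow 1 - 1) * S == 0 by rewrite mulrBl mul1r -S_shift subrr.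
by rewrite mulf_eq0 subr_eq0 -zpow0 (inj_eq zpow_inj) oner_eq0 => /eqP.
Qed.

Lemma sum_zpow_const_neq0 (N : 'F_p -> algC) :
  (forall k, k != 0 -> N k = N 1) -> \sum_k N k * zpow k = N 0 - N 1.
Proof.
move=> N_const; rewrite (bigD1 0) //= zpow0 mulr1; congr (_ + _).
rewrite (eq_bigr (fun k => N 1 * zpow k)) => [|k /N_const -> //].
have := sum_zpow; rewrite (bigD1 0) //= zpow0 => /eqP; rewrite addrC addr_eq0 => /eqP.
by rewrite -mulr_sumr => ->; rewrite mulrN1.
Qed.

Lemma zpow_aut a : a != 0 ->
  exists nu : {rmorphism algC -> algC}, forall k, nu (zpow k) = zpow (k * a).
Proof.
move=> a_neq0; have a_coprime : coprime (val a) p.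
  rewrite coprime_sym prime_coprime // gtnNdvd //.
    by rewrite lt0n; apply: contra a_neq0 => /eqP a0; apply/eqP/val_inj.
  by rewrite -[X in (_ < X)%N](Fp_cast pP) ltn_ord.
have [nu nuE] := Qn_aut_exists a_coprime; exists nu => k.
rewrite zpowM nuE // /zpow -exprM mulnC exprM.
by rewrite (prim_expr_order zeta_prim) expr1n.
Qed.

End AdditiveCharacter.

Section Fourier.
Variables (p m : nat) (F : finFieldType).
Hypotheses (charF : p \in [pchar F]) (cardF : #|F| = (p ^ m)%N).

Let pP : prime p := pcharf_prime charF.
Local Notation emb := (@emb p F).
Local Notation Tr := (@Tr p m F).
Local Notation zpow := (@zpow p).
Local Notation chi := (@chi p m F).
Local Notation scaleset := (@scaleset p F).

Definition fourier (h : F -> algC) (b : F) : algC :=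
  \sum_x h x * zpow (Tr (b * x)).

Lemma sum_zpow_Tr : \sum_x zpow (Tr x) = 0.
Proof.
have [y Ty_neq0] := exists_Tr_neq0 charF cardF.
set S := \sum_x _.
have : S * (zpow (Tr y) - 1) == 0.
  rewrite mulrBr mulr1 subr_eq0 {2}/S (reindex_inj (addIr y)) mulr_suml.
  by apply/eqP/eq_bigr => x _; rewrite TrD // zpowD.
rewrite mulf_eq0 subr_eq0 -(zpow0 p) (inj_eq (zpow_inj pP)).
by rewrite (negbTE Ty_neq0) orbF => /eqP.
Qed.

Lemma sum_zpow_Tr_mul z : \sum_b zpow (Tr (b * z)) = if z == 0 then #|F|%:R else 0.
Proof.
have [-> | z_neq0] := eqVneq z 0.
  by under eq_bigr do rewrite mulr0 Tr0 // zpow0; rewrite sumr_const.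
rewrite (reindex_inj (mulIf (invr_neq0 z_neq0))) /=.
by under eq_bigr do rewrite divfK //; rewrite sum_zpow_Tr.
Qed.

Lemma fourier_inversion h y :
  \sum_b fourier h b * zpow (- Tr (b * y)) = #|F|%:R * h y.
Proof.
have zpow_diff b x :
    zpow (Tr (b * x)) * zpow (- Tr (b * y)) = zpow (Tr (b * (x - y))).
  by rewrite -zpowD // mulrBr TrD // TrN.
rewrite /fourier; under eq_bigr do rewrite mulr_suml; rewrite exchange_big /=.
under eq_bigr do under eq_bigr do rewrite -mulrA zpow_diff.
under eq_bigr do rewrite -mulr_sumr sum_zpow_Tr_mul subr_eq0.
rewrite (bigD1 y) //= eqxx big1 ?addr0 1?mulrC // => x /negbTE ->.
by rewrite mulr0.
Qed.

Lemma fourier_scale_invariantP h c : c != 0 ->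
  (forall x, h (c * x) = h x) <-> (forall b, fourier h (c * b) = fourier h b).
Proof.
move=> c_neq0; split=> [h_inv b | fh_inv y].
  rewrite [RHS](reindex_inj (mulfI c_neq0)); apply: eq_bigr => x _.
  by rewrite h_inv [b * _]mulrCA mulrA.
have card_neq0 : #|F|%:R != 0 :> algC.
  by rewrite pnatr_eq0 -lt0n (ltnW (finNzRing_gt1 F)).
apply: (mulfI card_neq0); rewrite -!fourier_inversion.
rewrite (reindex_inj (mulfI (invr_neq0 c_neq0))) /=; apply: eq_bigr => b _.
by rewrite -(fh_inv (c^-1 * b)) mulVKf // [c^-1 * b * _]mulrCA -mulrA mulVKf.
Qed.

Lemma chi_fourier b D : chi b D = fourier (fun x => (x \in D)%:R) b.
Proof.
rewrite /chi /fourier [RHS](bigID (mem D)) /= [X in _ + X]big1 ?addr0.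
  by apply: eq_bigr => x ->; rewrite mul1r.
by move=> x /negbTE ->; rewrite mul0r.
Qed.

Lemma chi_by_trace b D :
  chi b D = \sum_k #|[set x in D | Tr (b * x) == k]|%:R * zpow k.
Proof.
rewrite /chi (partition_big (fun x => Tr (b * x)) predT) //=; apply: eq_bigr => k _.
rewrite (eq_bigr (fun=> zpow k)) => [|x /andP[_ /eqP ->] //].
rewrite (eq_bigl (fun x => x \in [set x in D | Tr (b * x) == k])) => [|x].
  by rewrite sumr_const mulr_natl.
by rewrite !inE.
Qed.

Definition scale_stable (D : {set F}) :=
  forall a x, a != 0 -> (emb a * x \in D) = (x \in D).

Lemma scale_stableP D :
  scale_stable D <-> forall a, a != 0 -> scaleset a D = D.
Proof.
split=> [D_stable a a_neq0 | D_fixed a x a_neq0].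
  apply/setP => y; apply/imsetP/idP => [[x x_in_D ->] | y_in_D].
    by rewrite D_stable.
  exists ((emb a)^-1 * y); last by rewrite mulVKf ?(emb_neq0 charF).
  by rewrite -(D_stable a _ a_neq0) mulVKf ?(emb_neq0 charF).
rewrite -{1}(D_fixed a a_neq0) /scaleset mem_imset //.
exact/mulfI/(emb_neq0 charF).
Qed.

Lemma scale_stable_card_Tr D b k : scale_stable D -> k != 0 ->
  #|[set x in D | Tr (b * x) == k]| = #|[set x in D | Tr (b * x) == 1]|.
Proof.
move=> D_stable k_neq0; rewrite -(card_preimset _ (mulfI (emb_neq0 charF k_neq0))).
apply: eq_card => x; rewrite !inE D_stable // mulrCA TrZ //.
by rewrite -{2}[k]mulr1 (inj_eq (mulfI k_neq0)).
Qed.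

Lemma chi_scale_int a b D : a != 0 -> chi b D \is a Num.int ->
  chi (emb a * b) D = chi b D.
Proof.
move=> a_neq0 chi_int; have [nu nuE] := zpow_aut pP a_neq0.
rewrite -[RHS](aut_intr nu chi_int) /chi rmorph_sum; apply: eq_bigr => x _.
by rewrite nuE -mulrA TrZ // mulrC.
Qed.

Lemma scale_stable_chi_int D :
  scale_stable D <-> forall b, chi b D \is a Num.int.
Proof.
split=> [D_stable b | chi_int a x a_neq0].
  rewrite chi_by_trace sum_zpow_const_neq0 ?rpredB ?rpred_nat // => k k_neq0.
  by rewrite scale_stable_card_Tr.
have indicator_inv : forall y, (emb a * y \in D)%:R = (y \in D)%:R :> algC.
  apply/(fourier_scale_invariantP _ (emb_neq0 charF a_neq0)) => b.
  by rewrite -!chi_fourier chi_scale_int.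
move: (indicator_inv x).
by case: (x \in D); case: (_ \in D) => // /eqP; rewrite eqr_nat.
Qed.

End Fourier.

Section ScaleInvariance.
Variables (p m : nat) (F : finFieldType) (f : F -> 'F_p).
Hypotheses (charF : p \in [pchar F]) (cardF : #|F| = (p ^ m)%N).

Let pP : prime p := pcharf_prime charF.
Local Notation emb := (@emb p F).
Local Notation zpow := (@zpow p).
Local Notation fourier := (@fourier p m F).
Local Notation Walsh := (@Walsh p m F f).
Local Notation Dfi := (@Dfi p F f).
Local Notation chi := (@chi p m F).
Local Notation scaleset := (@scaleset p F).
Local Notation scale_stable := (@scale_stable p F).

Definition scale_invariant := forall a x, a != 0 -> f (emb a * x) = f x.

Lemma scale_invariant_Dfi : scale_invariant <-> forall i, scale_stable (Dfi i).
Proof.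
split=> [f_inv i a x a_neq0 | D_stable a x a_neq0]; first by rewrite !inE f_inv.
by have := D_stable (f x) a x a_neq0; rewrite !inE eqxx => /eqP.
Qed.

Lemma Walsh_fourier b : Walsh b = fourier (zpow \o f) (- b).
Proof.
by apply: eq_bigr => x _; rewrite -zpowD // mulNr TrN.
Qed.

Lemma scale_invariant_Walsh :
  scale_invariant <-> forall a b, a != 0 -> Walsh (emb a * b) = Walsh b.
Proof.
split=> [f_inv a b a_neq0 | W_inv a x a_neq0].
  rewrite !Walsh_fourier -mulrN.
  apply: (fourier_scale_invariantP charF cardF _ (emb_neq0 charF a_neq0)).1 => y /=.
  by rewrite f_inv.
have zf_inv : forall y, (zpow \o f) (emb a * y) = (zpow \o f) y.
  apply/(fourier_scale_invariantP charF cardF _ (emb_neq0 charF a_neq0)) => b.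
  by rewrite -[b]opprK mulrN -!Walsh_fourier W_inv.
exact: zpow_inj pP _ _ (zf_inv x).
Qed.

Lemma scale_invariant_scaleset :
  scale_invariant <-> forall a i, a != 0 -> scaleset a (Dfi i) = Dfi i.
Proof.
split=> [/scale_invariant_Dfi D_stable a i | D_fixed].
  exact: (scale_stableP charF _).1 (D_stable i) a.
by apply/scale_invariant_Dfi => i; apply/(scale_stableP charF) => a /D_fixed.
Qed.

Lemma scale_invariant_chi_int :
  scale_invariant <-> forall i b, chi b (Dfi i) \is a Num.int.
Proof.
split=> [/scale_invariant_Dfi D_stable i | chi_int].
  exact: (scale_stable_chi_int charF cardF _).1 (D_stable i).
by apply/scale_invariant_Dfi => i; apply/(scale_stable_chi_int charF cardF).
Qed.

End ScaleInvariance.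

Theorem lemma4p4 (p m : nat) (F : finFieldType) (f : F -> 'F_p) :
  prime p -> p \in [pchar F] -> #|F| = (p ^ m)%N ->
  [<-> forall (a : 'F_p) (x : F), a != 0 -> f (@emb p F a * x) = f x;
       forall (a : 'F_p) (beta : F), a != 0 ->
         @Walsh p m F f (@emb p F a * beta) = @Walsh p m F f beta;
       forall (a i : 'F_p), a != 0 -> @scaleset p F a (@Dfi p F f i) = @Dfi p F f i;
       forall (i : 'F_p) (beta : F), @chi p m F beta (@Dfi p F f i) \is a Num.int].
Proof.
(* [prime p] also follows from [p \in [pchar F]]. *)
move=> _ charF cardF.
have Walsh_iff := scale_invariant_Walsh f charF cardF.
have scaleset_iff := scale_invariant_scaleset f charF.
have chi_int_iff := scale_invariant_chi_int f charF cardF.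
by tfae=> [/Walsh_iff | /Walsh_iff/scaleset_iff | /scaleset_iff/chi_int_iff | /chi_int_iff].
Qed.
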